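(* Let $(A,\leq,\cdot,/)$ be a unital narhoop with distinguished left identity $1$. Then: (1) $1$ is the top element of $(A,\leq)$ if and only if $\sqcap$ is commutative on $A$; (2) the principal ideal $(1]=\{x\in A\mid x\leq 1\}$ is closed under $\cdot$ and $/$ (hence is a subnarhoop), and $((1],\sqcap)$ is a semilattice.
   Context: Write $xy$ for $x\cdot y$; $\cdot$ binds more strongly than $/$, and $/$ binds more strongly than $\sqcap$, where $x\sqcap y := (x/y)y$. A right-residuated magma is a structure $(A,\leq,\cdot,/)$ where $(A,\leq)$ is a poset and $xy\leq z\iff x\leq z/y$ for all $x,y,z\in A$. A narhoop is a right-residuated magma such that for all $x,y$: $x\leq y\iff x\sqcap y = x = y\sqcap x$. A narhoop is unital if $x/x=y/y$ for all $x,y\in A$ (equivalently, $A$ has a left identity element); then $1$ denotes the common value $x/x$, which is a left identity element. A subnarhoop is a subset closed under $\cdot$ and $/$. *)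

Definition nmeet {A : Type} (mul div : A -> A -> A) (x y : A) : A :=
  mul (div x y) y.

Definition right_residuated_magma {A : Type} (le : A -> A -> Prop)
    (mul div : A -> A -> A) : Prop :=
  (forall x, le x x) /\
  (forall x y, le x y -> le y x -> x = y) /\
  (forall x y z, le x y -> le y z -> le x z) /\
  (forall x y z, le (mul x y) z <-> le x (div z y)).

Definition narhoop {A : Type} (le : A -> A -> Prop) (mul div : A -> A -> A) : Prop :=
  right_residuated_magma le mul div /\
  (forall x y, le x y <-> (nmeet mul div x y = x /\ nmeet mul div y x = x)).

(* In a narhoop, [x ⊓ y = (x / y) y] always lies below [x], and whenever it
   also lies below [y] it is the greatest lower bound of [x] and [y]: a lower
   bound [z] of both satisfies [z = (z / y) y <= (x / y) y] by monotonicity.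
   With a left identity [1 = y / y], residuation turns [x ⊓ y <= y] into
   [x / y <= 1].  So if [1] is the top element every [x ⊓ y] is a meet, whence
   commutativity; conversely commutativity gives [u ⊓ 1 = 1 ⊓ u <= 1] for
   [u = x 1], i.e. [u / 1 <= 1], and [x <= (x 1) / 1].  On the ideal [(1]] the same residuation facts show [x / y <= 1],
   so [⊓] is the meet there and the semilattice laws follow. *)

From Stdlib Require Import Setoid.

Section Narhoop.

Context {A : Type} {le : A -> A -> Prop} {mul div : A -> A -> A}.
Hypothesis narhoop_A : narhoop le mul div.

Local Infix "⊓" := (nmeet mul div) (at level 40, left associativity).

Lemma le_refl x : le x x.
Proof. apply (proj1 (proj1 narhoop_A)). Qed.

Lemma le_antisym x y : le x y -> le y x -> x = y.
Proof. apply (proj1 (proj2 (proj1 narhoop_A))). Qed.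

Lemma le_trans x y z : le x y -> le y z -> le x z.
Proof. apply (proj1 (proj2 (proj2 (proj1 narhoop_A)))). Qed.

Lemma le_mul_div x y z : le (mul x y) z <-> le x (div z y).
Proof. apply (proj2 (proj2 (proj2 (proj1 narhoop_A)))). Qed.

Lemma le_nmeet x y : le x y <-> x ⊓ y = x /\ y ⊓ x = x.
Proof. apply (proj2 narhoop_A). Qed.

Lemma eq_of_lower_bounds x y : (forall z, le z x <-> le z y) -> x = y.
Proof.
  intros H; apply le_antisym; [apply H | apply <- H]; apply le_refl.
Qed.

Lemma nmeet_le_l x y : le (x ⊓ y) x.
Proof. apply le_mul_div, le_refl. Qed.

Lemma le_div_mul x y : le x (div (mul x y) y).
Proof. apply le_mul_div, le_refl. Qed.

Lemma mul_le_mul_r x x' y : le x x' -> le (mul x y) (mul x' y).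
Proof. intros H; apply le_mul_div, (le_trans _ _ _ H), le_div_mul. Qed.

Lemma div_le_div_r z z' y : le z z' -> le (div z y) (div z' y).
Proof. intros H; apply le_mul_div, (le_trans _ _ _ (nmeet_le_l z y) H). Qed.

Lemma le_nmeet_of_le z x y : le z x -> le z y -> le z (x ⊓ y).
Proof.
  intros Hx Hy; destruct (proj1 (le_nmeet z y) Hy) as [Hzy _].
  rewrite <- Hzy; apply mul_le_mul_r, div_le_div_r, Hx.
Qed.

Lemma le_nmeet_iff x y z :
  le (x ⊓ y) y -> (le z (x ⊓ y) <-> le z x /\ le z y).
Proof.
  intros Hy; split.
  - intros Hz; split; eapply le_trans; eauto using nmeet_le_l.
  - intros [Hx Hzy]; apply le_nmeet_of_le; assumption.
Qed.

Lemma nmeet_comm_of_le x y : le (x ⊓ y) y -> le (y ⊓ x) x -> x ⊓ y = y ⊓ x.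
Proof.
  intros Hxy Hyx; apply eq_of_lower_bounds; intros z.
  rewrite (le_nmeet_iff _ _ z Hxy), (le_nmeet_iff _ _ z Hyx); tauto.
Qed.

Section Unital.

Context {one : A}.
Hypothesis div_self : forall x, div x x = one.

Lemma mul_1l x : mul one x = x.
Proof. rewrite <- (div_self x); apply (le_nmeet x x), le_refl. Qed.

Lemma mul_le_r a y : le a one -> le (mul a y) y.
Proof. intros Ha; rewrite <- (mul_1l y) at 2; apply mul_le_mul_r, Ha. Qed.

Lemma div_le_1 x y : le (div x y) one <-> le (x ⊓ y) y.
Proof. rewrite <- (div_self y); symmetry; apply le_mul_div. Qed.

Lemma nmeet_le_r_of_top x y : (forall z, le z one) -> le (x ⊓ y) y.
Proof. intros Htop; apply mul_le_r, Htop. Qed.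

Lemma top_of_nmeet_comm :
  (forall x y, x ⊓ y = y ⊓ x) -> forall x, le x one.
Proof.
  intros Hcomm x; apply (le_trans _ _ _ (le_div_mul x one)), div_le_1.
  rewrite Hcomm; apply nmeet_le_l.
Qed.

Lemma div_le_1_ideal x y : le x one -> le y one -> le (div x y) one.
Proof.
  intros Hx Hy; apply (le_trans _ (div one y)); [apply div_le_div_r, Hx |].
  apply div_le_1; rewrite (proj2 (proj1 (le_nmeet y one) Hy)); apply le_refl.
Qed.

Lemma mul_le_1_ideal x y : le x one -> le y one -> le (mul x y) one.
Proof. intros Hx Hy; apply (le_trans _ y); [apply mul_le_r |]; assumption. Qed.

Lemma nmeet_le_r_ideal x y : le x one -> le y one -> le (x ⊓ y) y.
Proof. intros Hx Hy; apply mul_le_r, div_le_1_ideal; assumption. Qed.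

Lemma nmeet_le_1_ideal x y : le x one -> le y one -> le (x ⊓ y) one.
Proof. intros Hx Hy; apply mul_le_1_ideal; auto using div_le_1_ideal. Qed.

Lemma nmeet_id x : x ⊓ x = x.
Proof. unfold nmeet; rewrite div_self; apply mul_1l. Qed.

Lemma nmeet_comm_ideal x y : le x one -> le y one -> x ⊓ y = y ⊓ x.
Proof. intros Hx Hy; apply nmeet_comm_of_le; auto using nmeet_le_r_ideal. Qed.

Lemma nmeet_assoc_ideal x y z :
  le x one -> le y one -> le z one -> x ⊓ y ⊓ z = x ⊓ (y ⊓ z).
Proof.
  intros Hx Hy Hz; apply eq_of_lower_bounds; intros w.
  rewrite !le_nmeet_iff; auto using nmeet_le_r_ideal, nmeet_le_1_ideal; tauto.
Qed.

End Unital.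

End Narhoop.

Theorem mainTheorem10 (A : Type) (le : A -> A -> Prop) (mul div : A -> A -> A)
    (one : A)
    (Hn : narhoop le mul div)
    (Hone : forall x : A, div x x = one) :
  ((forall x : A, le x one) <->
     (forall x y : A, nmeet mul div x y = nmeet mul div y x)) /\
  ((forall x y : A, le x one -> le y one ->
      le (mul x y) one /\ le (div x y) one) /\
   (forall x y z : A, le x one -> le y one -> le z one ->
      le (nmeet mul div x y) one /\
      nmeet mul div x x = x /\
      nmeet mul div x y = nmeet mul div y x /\
      nmeet mul div (nmeet mul div x y) z = nmeet mul div x (nmeet mul div y z))).
Proof.
  split; [split | split].
  - intros Htop x y.
    apply (nmeet_comm_of_le Hn); exact (nmeet_le_r_of_top Hn Hone _ _ Htop).
  - exact (top_of_nmeet_comm Hn Hone).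
  - split; eauto using (mul_le_1_ideal Hn Hone), (div_le_1_ideal Hn Hone).
  - intros x y z Hx Hy Hz; split; [| split; [| split]].
    + exact (nmeet_le_1_ideal Hn Hone _ _ Hx Hy).
    + exact (nmeet_id Hn Hone x).
    + exact (nmeet_comm_ideal Hn Hone _ _ Hx Hy).
    + exact (nmeet_assoc_ideal Hn Hone _ _ _ Hx Hy Hz).
Qed.
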